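(* Let $(\Omega,\Sigma,\mathbb{P}_0)$ be a probability space, $\mathbb{L}^2=\mathbb{L}^2(\Omega,\Sigma,\mathbb{P}_0)$, and $n\ge 2$ an integer. Then $\mathrm{MAXVAR}_n$ is an averse risk measure, i.e. it satisfies: (A1) $\mathrm{MAXVAR}_n(C)=C$ for every constant $C$; (A2) $\mathrm{MAXVAR}_n(\lambda X+(1-\lambda)Y)\le \lambda\,\mathrm{MAXVAR}_n(X)+(1-\lambda)\,\mathrm{MAXVAR}_n(Y)$ for all $X,Y\in\mathbb{L}^2$, $\lambda\in[0,1]$; (A4) if $\|X^k-X\|_2\to0$ and $\mathrm{MAXVAR}_n(X^k)\le 0$ for all $k$, then $\mathrm{MAXVAR}_n(X)\le0$; (A5) $\mathrm{MAXVAR}_n(\lambda X)=\lambda\,\mathrm{MAXVAR}_n(X)$ for all $\lambda>0$, $X\in\mathbb{L}^2$; (A6) $\mathrm{MAXVAR}_n(X)>\mathbb{E}(X)$ for every non-constant $X\in\mathbb{L}^2$.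
   Context: For $X\in\mathbb{L}^2$, $\mathrm{MAXVAR}_n(X)=\mathbb{E}(\max\{X_1,\dots,X_n\})$, where $X_1,\dots,X_n$ are independent random variables each with the same distribution as $X$ (the value depends only on the distribution of $X$). ''Non-constant'' means not almost surely equal to a constant. *)

From HB Require Import structures.
From mathcomp Require Import all_boot all_order all_algebra.
From mathcomp Require Import all_classical all_reals all_analysis.
Set Implicit Arguments. Unset Strict Implicit. Unset Printing Implicit Defensive.
Import Order.TTheory GRing.Theory Num.Theory.
Local Open Scope ring_scope.
Local Open Scope ereal_scope.

Definition L2 d (T : measurableType d) (R : realType)
  (P : probability T R) (X : T -> R) : Prop :=
  measurable_fun setT X /\ 'N[P]_2%:E [EFin \o X] < +oo.

(* maxvar_aux P X k m = E[max(m, X_1, ..., X_k)] for X_1..X_k i.i.d. copies of X,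
   computed as an iterated integral over k independent copies of Omega. *)
Fixpoint maxvar_aux d (T : measurableType d) (R : realType)
  (P : probability T R) (X : T -> R) (k : nat) (m : R) : \bar R :=
  match k with
  | O => m%:E
  | k'.+1 => \int[P]_w maxvar_aux P X k' (Num.max m (X w))
  end.

(* MAXVAR_n(X) = E[max(X_1, ..., X_n)] with X_1..X_n i.i.d. copies of X,
   i.e. the integral of max(x_1,..,x_n) w.r.t. the n-fold product of P
   (written as an iterated integral over Omega^n). *)
Definition MAXVAR d (T : measurableType d) (R : realType)
  (P : probability T R) (n : nat) (X : T -> R) : \bar R :=
  \int[P]_w maxvar_aux P X n.-1 (X w).

From HB Require Import structures.
From mathcomp Require Import all_boot all_order all_algebra.
From mathcomp Require Import all_classical all_reals all_analysis.
From mathcomp Require Import measurable_realfun lra.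
Import Order.TTheory GRing.Theory Num.Theory.
Local Open Scope classical_set_scope.
Local Open Scope ring_scope.

(* Let g_k(m) = E[max(m, X_1, ..., X_k)], so that g_0 = id,
   g_(k+1)(m) = E[g_k(max(m, X))] and MAXVAR_n(X) = E[g_(n-1)(X)].  By induction
   every g_k is nondecreasing, 1-Lipschitz and above the identity; in particular
   it is finite and g_k o f is integrable for integrable f.  Constants, positive
   homogeneity and convexity of max propagate through the recursion, giving (A1),
   (A5) and (A2).  The Lipschitz bound propagates to
   MAXVAR_n(X) <= MAXVAR_n(Y) + n E|X - Y| <= MAXVAR_n(Y) + n ||X - Y||_2,
   which gives (A4).  For n >= 2, MAXVAR_n(X) >= E[max(E X, X)], and
   E[max(E X, X)] - E X = E|X - E X| / 2 vanishes only if X is a.s. constant (A6). *)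

Set Implicit Arguments.
Unset Strict Implicit.

Section maxr_inequalities.
Variable R : realFieldType.
Implicit Types a b l x y : R.

Lemma ler_dist_maxr a x y : `|Num.max a x - Num.max a y| <= `|x - y|.
Proof.
have := ler_norm (x - y); have := ler_norm (y - x); rewrite distrC.
by rewrite ler_norml; case: (leP a x); case: (leP a y) => *; apply/andP; split; lra.
Qed.

Lemma maxr_convex l a b x y : 0 <= l <= 1 ->
  Num.max (l * a + (1 - l) * b) (l * x + (1 - l) * y)
    <= l * Num.max a x + (1 - l) * Num.max b y.
Proof.
move=> /andP[l0 l1]; have l1' : 0 <= 1 - l by rewrite subr_ge0.
by rewrite ge_max !lerD ?ler_wpM2l // le_max lexx ?orbT.
Qed.

(* The shape of m |-> E[max(m, Z)] for an integrable Z. *)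
Definition maxE_like (g : R -> R) :=
  [/\ nondecreasing_fun g, forall a b, `|g a - g b| <= `|a - b| & forall m, m <= g m].

Lemma maxE_like_id : maxE_like id.
Proof. by split. Qed.

End maxr_inequalities.

Section MAXVAR.
Context d (T : measurableType d) (R : realType) (P : probability T R).
Local Notation L1 f := (P.-integrable setT (EFin \o f)).
Implicit Types (X Y f : T -> R) (g : R -> R).

Lemma Rintegral_cst_prob (c : R) : \int[P]_w c = c.
Proof. by rewrite Rintegral_cst // (congr1 fine (probability_setT P)) mulr1. Qed.

Lemma EFin_Rintegral f : L1 f -> (\int[P]_w f w)%:E = (\int[P]_w (f w)%:E)%E.
Proof. by move=> f1; rewrite fineK // integrable_fin_num. Qed.

Lemma L1_measurable f : L1 f -> measurable_fun setT f.
Proof. by move=> /integrableP[/measurable_EFinP]. Qed.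

Lemma L1_cst (c : R) : L1 (fun _ => c).
Proof. exact: finite_measure_integrable_cst. Qed.

Lemma L1D f1 f2 : L1 f1 -> L1 f2 -> L1 (fun w => f1 w + f2 w).
Proof. by move=> i1 i2; apply: eq_integrable (integrableD measurableT i1 i2). Qed.

Lemma L1Z (c : R) f : L1 f -> L1 (fun w => c * f w).
Proof. by move=> i; apply: eq_integrable (integrableZl measurableT c i). Qed.

Lemma L1B f1 f2 : L1 f1 -> L1 f2 -> L1 (fun w => f1 w - f2 w).
Proof. by move=> i1 i2; apply: eq_integrable (integrableB measurableT i1 i2). Qed.

Lemma L1_norm f : L1 f -> L1 (fun w => `|f w|).
Proof. exact: integrable_norm. Qed.

Lemma L1_contraction_comp g f : nondecreasing_fun g ->
  (forall a b, `|g a - g b| <= `|a - b|) -> L1 f -> L1 (g \o f).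
Proof.
move=> g_nd g_lip f1.
have bound1 : L1 (fun w => `|g 0| + `|f w|) by apply: L1D; [exact: L1_cst|exact: L1_norm].
apply: le_integrable bound1 => //.
  apply/measurable_EFinP/measurableT_comp; last exact: L1_measurable.
  exact: nondecreasing_measurable.
move=> w _; rewrite /= !lee_fin [X in _ <= X]ger0_norm ?addr_ge0 //.
have := g_lip (f w) 0; rewrite subr0; have := ler_distD (g 0) (g (f w)) 0.
by rewrite !subr0 distrC; lra.
Qed.

Lemma L1_maxr (m : R) f : L1 f -> L1 (fun w => Num.max m (f w)).
Proof.
apply: (@L1_contraction_comp (Num.max m)); first by move=> a b; exact: le_max2.
exact: ler_dist_maxr.
Qed.

Lemma le_maxr_Rintegral (m : R) X : L1 X ->
  Num.max m (\int[P]_w X w) <= \int[P]_w Num.max m (X w).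
Proof.
move=> X1; have mX1 := L1_maxr m X1.
rewrite ge_max; apply/andP; split; last first.
  by apply: le_Rintegral => // w _; rewrite le_max lexx orbT.
rewrite -[X in X <= _](Rintegral_cst_prob m).
by apply: le_Rintegral => //; [exact: L1_cst | move=> w _; rewrite le_max lexx].
Qed.

Lemma maxE_like_step g X : maxE_like g -> L1 X ->
  maxE_like (fun m => \int[P]_w g (Num.max m (X w))).
Proof.
move=> [g_nd g_lip g_ge] X1.
have gX1 m : L1 (fun w => g (Num.max m (X w))).
  exact: (L1_contraction_comp g_nd g_lip (L1_maxr m X1)).
split.
- by move=> a b ab; apply: le_Rintegral => // w _; apply/g_nd/le_max2.
- move=> a b; rewrite -RintegralB //.
  apply: le_trans (le_normr_Rintegral _ _) _ => //; first exact: L1B.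
  rewrite -[X in _ <= X]Rintegral_cst_prob; apply: le_Rintegral => //.
  + by apply/L1_norm/L1B.
  + exact: L1_cst.
  + move=> w _; apply: le_trans (g_lip _ _) _.
    by rewrite (maxC a) (maxC b) ler_dist_maxr.
- move=> m; rewrite -[X in X <= _](Rintegral_cst_prob m).
  apply: le_Rintegral => // [|w _]; first exact: L1_cst.
  by apply: le_trans (g_ge _); rewrite le_max lexx.
Qed.

(* [fine] loses nothing here: [maxvar_funP] shows that [maxvar_aux] is finite. *)
Definition maxvar_fun X k m := fine (maxvar_aux P X k m).

Lemma maxvar_funP X k : L1 X ->
  maxE_like (maxvar_fun X k) /\ forall m, maxvar_aux P X k m = (maxvar_fun X k m)%:E.
Proof.
move=> X1; elim: k => [|k [g_like g_fin]].
  by split=> //; exact: maxE_like_id.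
have [g_nd g_lip _] := g_like.
have auxE m : maxvar_aux P X k.+1 m = (\int[P]_w maxvar_fun X k (Num.max m (X w)))%:E.
  rewrite /= EFin_Rintegral; last exact: L1_contraction_comp (L1_maxr m X1).
  by apply: eq_integral => w _; rewrite g_fin.
have -> : maxvar_fun X k.+1 = fun m => \int[P]_w maxvar_fun X k (Num.max m (X w)).
  by apply/funext => m; rewrite /maxvar_fun auxE.
by split; [exact: maxE_like_step | exact: auxE].
Qed.

Lemma maxE_like_maxvar_fun X k : L1 X -> maxE_like (maxvar_fun X k).
Proof. by move=> X1; case: (maxvar_funP k X1). Qed.

Lemma L1_maxvar_fun X k f : L1 X -> L1 f -> L1 (fun w => maxvar_fun X k (f w)).
Proof.
by move=> X1; have [g_nd g_lip _] := maxE_like_maxvar_fun k X1; exact: L1_contraction_comp.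
Qed.

Lemma maxvar_funS X k m : L1 X ->
  maxvar_fun X k.+1 m = \int[P]_w maxvar_fun X k (Num.max m (X w)).
Proof.
move=> X1; rewrite {1}/maxvar_fun /=.
under eq_integral => w _ do rewrite (maxvar_funP k X1).2.
by rewrite -EFin_Rintegral //; apply/L1_maxvar_fun/L1_maxr.
Qed.

Lemma MAXVARE n X : L1 X -> MAXVAR P n X = (\int[P]_w maxvar_fun X n.-1 (X w))%:E.
Proof.
move=> X1; rewrite /MAXVAR EFin_Rintegral; last exact: L1_maxvar_fun.
by apply: eq_integral => w _; rewrite (maxvar_funP _ X1).2.
Qed.

Lemma maxvar_fun_cst (C : R) k : maxvar_fun (fun _ => C) k C = C.
Proof.
elim: k => [//|k IH]; rewrite maxvar_funS; last exact: L1_cst.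
by under eq_Rintegral => w _ do rewrite maxxx IH; rewrite Rintegral_cst_prob.
Qed.

Lemma MAXVAR_cst n (C : R) : MAXVAR P n (fun _ => C) = C%:E.
Proof.
rewrite MAXVARE; last exact: L1_cst.
by under eq_Rintegral => w _ do rewrite maxvar_fun_cst; rewrite Rintegral_cst_prob.
Qed.

Lemma maxvar_funZ X l k m : L1 X -> 0 < l ->
  maxvar_fun (fun w => l * X w) k (l * m) = l * maxvar_fun X k m.
Proof.
move=> X1 l0; elim: k m => [//|k IH] m.
rewrite !maxvar_funS //; last exact: L1Z.
under eq_Rintegral => w _ do rewrite -(maxr_pMr _ _ (ltW l0)) IH.
by rewrite RintegralZl //; apply/L1_maxvar_fun/L1_maxr.
Qed.

Lemma MAXVARZ n X l : L1 X -> 0 < l ->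
  MAXVAR P n (fun w => l * X w) = (l%:E * MAXVAR P n X)%E.
Proof.
move=> X1 l0; rewrite !MAXVARE //; last exact: L1Z.
under eq_Rintegral => w _ do rewrite maxvar_funZ //.
by rewrite RintegralZl //; exact: L1_maxvar_fun.
Qed.

Lemma maxvar_fun_convex X Y l k a b : L1 X -> L1 Y -> 0 <= l <= 1 ->
  maxvar_fun (fun w => l * X w + (1 - l) * Y w) k (l * a + (1 - l) * b)
    <= l * maxvar_fun X k a + (1 - l) * maxvar_fun Y k b.
Proof.
move=> X1 Y1 l01; elim: k a b => [//|k IH] a b.
set Z := fun w => _ + _.
have Z1 : L1 Z by apply: L1D; exact: L1Z.
have [Z_nd _ _] := maxE_like_maxvar_fun k Z1.
have gX1 := L1_maxvar_fun k X1 (L1_maxr a X1).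
have gY1 := L1_maxvar_fun k Y1 (L1_maxr b Y1).
rewrite !maxvar_funS // -!RintegralZl // -RintegralD //; try exact: L1Z.
apply: le_Rintegral => //.
- exact/L1_maxvar_fun/L1_maxr.
- by apply: L1D; exact: L1Z.
- move=> w _; exact: le_trans (Z_nd _ _ (maxr_convex _ _ _ _ l01)) (IH _ _).
Qed.

Lemma MAXVAR_convex n X Y l : L1 X -> L1 Y -> 0 <= l <= 1 ->
  (MAXVAR P n (fun w => l * X w + (1 - l) * Y w)%R
    <= l%:E * MAXVAR P n X + (1 - l)%R%:E * MAXVAR P n Y)%E.
Proof.
move=> X1 Y1 l01.
have Z1 : L1 (fun w => l * X w + (1 - l) * Y w) by apply: L1D; exact: L1Z.
have gX1 := L1_maxvar_fun n.-1 X1 X1; have gY1 := L1_maxvar_fun n.-1 Y1 Y1.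
rewrite !MAXVARE // -!EFinM -EFinD lee_fin -!RintegralZl // -RintegralD //; try exact: L1Z.
apply: le_Rintegral => //.
- exact: L1_maxvar_fun.
- by apply: L1D; exact: L1Z.
- move=> w _; exact: maxvar_fun_convex.
Qed.

Lemma le_Rintegral_comp g h f1 f2 c : L1 f1 -> L1 f2 ->
  (forall a b, `|h a - h b| <= `|a - b|) -> L1 (g \o f1) -> L1 (h \o f2) ->
  (forall m, g m <= h m + c) ->
  \int[P]_w g (f1 w) <= \int[P]_w h (f2 w) + \int[P]_w `|f1 w - f2 w| + c.
Proof.
move=> f1_1 f2_1 h_lip gf1 hf2 gh.
have d1 : L1 (fun w => `|f1 w - f2 w|) by apply/L1_norm/L1B.
rewrite -[c in X in _ <= X]Rintegral_cst_prob -!RintegralD //; last exact: L1_cst.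
- apply: le_Rintegral => //; first by apply: L1D; [exact: L1D | exact: L1_cst].
  by move=> w _; apply: le_trans (gh _) _; rewrite lerD2r; exact/ler_distlDr/h_lip.
- exact: L1D.
Qed.

Lemma maxvar_fun_lipschitz X Y k : L1 X -> L1 Y ->
  forall m, maxvar_fun X k m <= maxvar_fun Y k m + k%:R * \int[P]_w `|X w - Y w|.
Proof.
move=> X1 Y1; elim: k => [|k IH] m; first by rewrite mul0r addr0.
have [_ gY_lip _] := maxE_like_maxvar_fun k Y1.
have max_dist : \int[P]_w `|Num.max m (X w) - Num.max m (Y w)| <= \int[P]_w `|X w - Y w|.
  apply: le_Rintegral => //; last by move=> w _; exact: ler_dist_maxr.
  - by apply/L1_norm/L1B; exact: L1_maxr.
  - exact/L1_norm/L1B.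
rewrite !maxvar_funS //.
have [mX1 mY1] := (L1_maxr m X1, L1_maxr m Y1).
apply: le_trans (le_Rintegral_comp mX1 mY1 gY_lip _ _ IH) _.
- exact: L1_maxvar_fun.
- exact: L1_maxvar_fun.
- by rewrite -natr1 mulrDl mul1r; lra.
Qed.

Lemma MAXVAR_lipschitz n X Y : (0 < n)%N -> L1 X -> L1 Y ->
  (MAXVAR P n X <= MAXVAR P n Y + (n%:R * \int[P]_w `|X w - Y w|)%:E)%E.
Proof.
case: n => // n _ X1 Y1; have [_ gY_lip _] := maxE_like_maxvar_fun n Y1.
rewrite !MAXVARE // -EFinD lee_fin /=.
apply: le_trans (le_Rintegral_comp X1 Y1 gY_lip _ _ (maxvar_fun_lipschitz n X1 Y1)) _.
- exact: L1_maxvar_fun.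
- exact: L1_maxvar_fun.
- by rewrite -natr1 mulrDl mul1r; lra.
Qed.

Lemma Rintegral_norm_eq0 f : L1 f -> \int[P]_w `|f w| = 0 -> {ae P, forall w, f w = 0}.
Proof.
move=> f1 norm0.
have : (\int[P]_w `|(f w)%:E| = 0)%E by rewrite -EFin_Rintegral ?norm0 //; exact: L1_norm.
have /integrableP[mf1 _] := f1.
move/(ae_eq_integral_abs P measurableT mf1).
by apply: filterS => w /(_ I) [].
Qed.

Lemma Rintegral_lt_maxr_mean X : L1 X -> ~ (exists c, {ae P, forall w, X w = c}) ->
  \int[P]_w X w < \int[P]_w Num.max (\int[P]_w X w) (X w).
Proof.
move=> X1 nonconst; set c := \int[P]_w X w.
have mX1 := L1_maxr c X1.
have Xc1 : L1 (fun w => X w - c) by apply: L1B => //; exact: L1_cst.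
have c_le : c <= \int[P]_w Num.max c (X w).
  by apply: le_Rintegral => // w _; rewrite le_max lexx orbT.
have norm_eq : \int[P]_w `|X w - c| = 2 * (\int[P]_w Num.max c (X w) - c).
  transitivity (\int[P]_w (2 * (Num.max c (X w) - X w) + (X w - c))).
    apply: eq_Rintegral => w _; case: (leP c (X w)) => cX.
      by rewrite ger0_norm ?subr_ge0 //; lra.
    by rewrite ltr0_norm ?subr_lt0 //; lra.
  have gap1 : L1 (fun w => Num.max c (X w) - X w) by exact: L1B.
  rewrite RintegralD ?RintegralZl ?RintegralB -/c ?Rintegral_cst_prob //.
  - by rewrite subrr addr0.
  - exact: L1_cst.
  - exact: L1Z.
rewrite lt_neqAle c_le andbT; apply/negP => /eqP c_eq; apply: nonconst; exists c.
have norm0 : \int[P]_w `|X w - c| = 0 by rewrite norm_eq -c_eq subrr mulr0.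
by apply: filterS (Rintegral_norm_eq0 Xc1 norm0) => w /eqP; rewrite subr_eq0 => /eqP.
Qed.

Lemma maxr_mean_le_maxvar_funS X k m : L1 X ->
  Num.max m (\int[P]_w X w) <= maxvar_fun X k.+1 m.
Proof.
move=> X1; have [_ _ g_ge] := maxE_like_maxvar_fun k X1.
rewrite maxvar_funS //; apply: le_trans (le_maxr_Rintegral m X1) _.
apply: le_Rintegral => //.
- exact: L1_maxr.
- exact/L1_maxvar_fun/L1_maxr.
Qed.

Lemma MAXVAR_gt_mean n X : (1 < n)%N -> L1 X ->
  ~ (exists c, {ae P, forall w, X w = c}) -> (\int[P]_w (X w)%:E < MAXVAR P n X)%E.
Proof.
case: n => [|[|k]] // _ X1 nonconst; rewrite -EFin_Rintegral // MAXVARE // lte_fin /=.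
apply: lt_le_trans (Rintegral_lt_maxr_mean X1 nonconst) _.
apply: le_Rintegral => //.
- exact: L1_maxr.
- exact: L1_maxvar_fun.
- by move=> w _; rewrite maxC; exact: maxr_mean_le_maxvar_funS.
Qed.

Local Open Scope ereal_scope.

Lemma L2_integrable X : L2 P X -> L1 X.
Proof.
move=> [mX X2]; apply/Lfun1_integrable/(Lfun_subset12 (mu := P)).
  exact: fin_num_measure.
by rewrite inE; apply/andP; split; rewrite inE.
Qed.

Lemma integral_norm_le_Lnorm2 f : measurable_fun setT f ->
  \int[P]_w `|f w|%:E <= 'N[P]_2%:E [EFin \o f].
Proof.
move=> mf; have half2 : (2^-1 + 2^-1 = 1 :> R)%R by lra.
have := hoelder P mf (measurable_cst (1 : R)%R) (ltr0Sn _ 1) (ltr0Sn _ 1) half2.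
rewrite Lnorm1 (_ : EFin \o cst 1%R = cst 1) // Lnorm_cst1.
rewrite (_ : _ [set: T] = 1) ?poweR1r ?mule1; last exact: probability_setT.
by under eq_integral => w _ do rewrite /= mulr1.
Qed.

Lemma MAXVAR_le0_closed n (Xk : nat -> T -> R) X : (0 < n)%N ->
  (forall k, L2 P (Xk k)) -> L2 P X ->
  (fun k => 'N[P]_2%:E [EFin \o (fun w => Xk k w - X w)%R]) @ \oo --> 0 ->
  (forall k, MAXVAR P n (Xk k) <= 0) -> MAXVAR P n X <= 0.
Proof.
move=> n0 Xk2 X2 cvg0 le0; have X1 := L2_integrable X2.
have bound k :
    MAXVAR P n X <= n%:R%:E * 'N[P]_2%:E [EFin \o (fun w => Xk k w - X w)%R].
  have Xk1 := L2_integrable (Xk2 k); have XkX1 : L1 (fun w => Xk k w - X w)%R by exact: L1B.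
  apply: le_trans (MAXVAR_lipschitz n0 X1 Xk1) _.
  rewrite -[leRHS]add0e leeD // EFinM lee_wpmul2l ?lee_fin // EFin_Rintegral.
    under eq_integral => w _ do rewrite distrC.
    exact/integral_norm_le_Lnorm2/L1_measurable.
  exact/L1_norm/L1B.
have := cvgeZl (fin_numE n%:R%:E) cvg0; rewrite mule0 => cvg_bound.
apply: (cvge_to_ge cvg_bound); exact: nearW.
Qed.

End MAXVAR.

Local Open Scope ereal_scope.

Theorem theorem2 (d : measure_display) (T : measurableType d) (R : realType)
  (P : probability T R) (n : nat) (hn : (2 <= n)%N) :
  (* (A1) *)
  (forall C : R, MAXVAR P n (fun _ => C) = C%:E) /\
  (* (A2) *)
  (forall (X Y : T -> R) (l : R), L2 P X -> L2 P Y -> (0 <= l <= 1)%R ->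
     MAXVAR P n (fun w => l * X w + (1 - l) * Y w)%R
       <= l%:E * MAXVAR P n X + (1 - l)%R%:E * MAXVAR P n Y) /\
  (* (A4) *)
  (forall (Xk : nat -> T -> R) (X : T -> R),
     (forall k, L2 P (Xk k)) -> L2 P X ->
     (fun k => 'N[P]_2%:E [EFin \o (fun w => Xk k w - X w)%R]) @ \oo --> 0 ->
     (forall k, MAXVAR P n (Xk k) <= 0) ->
     MAXVAR P n X <= 0) /\
  (* (A5) *)
  (forall (X : T -> R) (l : R), L2 P X -> (0 < l)%R ->
     MAXVAR P n (fun w => l * X w)%R = l%:E * MAXVAR P n X) /\
  (* (A6) *)
  (forall X : T -> R, L2 P X ->
     ~ (exists c : R, {ae P, forall w, X w = c}) ->
     \int[P]_w (X w)%:E < MAXVAR P n X).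
Proof.
have n0 : (0 < n)%N by exact: ltnW.
split; first exact: MAXVAR_cst.
split; first by move=> X Y l /L2_integrable X1 /L2_integrable Y1; exact: MAXVAR_convex.
split; first by move=> Xk X; exact: MAXVAR_le0_closed.
split; first by move=> X l /L2_integrable; exact: MAXVARZ.
by move=> X /L2_integrable; exact: MAXVAR_gt_mean.
Qed.
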